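(* Let $G$ be a graph, $\alpha,k$ positive integers, and $S\subseteq V(G)$ with $|S|\ge\alpha+1$ and $|\delta_G(S,V(G)\setminus S)|\le 2\alpha^2+4k$. For $v\in S$ let $\gamma_S(v)=|\delta_G(\{v\},V(G)\setminus S)|$, and for $X\subseteq S$ let $\gamma_S(X)=\sum_{v\in X}\gamma_S(v)$. If $\mathrm{ecrw}_\alpha(G)\le k$, then there is a tree-cut decomposition $\mathcal{T}=(T,\{X_t\}_{t\in V(T)})$ of $G[S]$ such that: (a) $T$ is a star with center $t_c$ and at least one leaf; (b) $|X_{t_c}|\le\alpha$ and $\mathrm{cross}_{\mathcal T}(t_c)\le k$; (c) for each leaf $t$ of $T$, $\gamma_S(X_t)\le\alpha^2+2k$ and $|\delta_{G[S]}(X_t,X_{t_c})|\le\alpha^2+k$; (d) there is no leaf $q$ of $T$ with $X_q=S$. (That is, $(G[S],\alpha,k,\gamma_S)$ is a Yes-instance of \textsc{Constrained Star-Cut Decomposition}.)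
   Context: For disjoint vertex sets $S_1,S_2$ of a graph $G$, $\delta_G(S_1,S_2)$ denotes the set of edges with one endpoint in $S_1$ and the other in $S_2$. A tree-cut decomposition of a graph $G$ is a pair $\mathcal{T}=(T,\{X_t\}_{t\in V(T)})$ where $T$ is a tree and the bags $X_t\subseteq V(G)$ are pairwise disjoint (possibly empty) with $\bigcup_{t\in V(T)}X_t=V(G)$. For a node $t$ of $T$, let $T_1,\dots,T_m$ be the connected components of $T-t$ and $Z_i=\bigcup_{s\in V(T_i)}X_s$; $\mathrm{cross}_{\mathcal{T}}(t)$ is the number of edges of $G$ whose two endpoints lie in two distinct sets among $Z_1,\dots,Z_m$ (if $T$ has one node, $\mathrm{cross}_{\mathcal T}(t)=0$). The crossing number of $\mathcal{T}$ is $\max_{t}\mathrm{cross}_{\mathcal{T}}(t)$, and the thickness of $\mathcal{T}$ is $\max_t|X_t|$. $\mathrm{ecrw}_\alpha(G)$ is the minimum crossing number over tree-cut decompositions of $G$ of thickness at most $\alpha$. *)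

(* Finite simple graphs as symmetric irreflexive relations. *)
From mathcomp Require Import all_boot.
Set Implicit Arguments. Unset Strict Implicit. Unset Printing Implicit Defensive.

Definition edges (V : finType) (e : rel V) : {set {set V}} :=
  [set f : {set V} | [exists u, exists v, (f == [set u; v]) && e u v]].

Definition delta (V : finType) (e : rel V) (S1 S2 : {set V}) : nat :=
  #|[set f : {set V} | [exists u, exists v,
       [&& f == [set u; v], e u v, u \in S1 & v \in S2]]]|.

Definition is_tree (n : nat) (tr : rel 'I_n) : Prop :=
  [/\ 0 < n, symmetric tr, irreflexive tr,
      (forall a b, connect tr a b) & #|edges tr| = n.-1].

Definition is_tcd (V : finType) (e : rel V) (n : nat) (tr : rel 'I_n)
    (X : 'I_n -> {set V}) : Prop :=
  [/\ is_tree tr,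
      (forall s s', s != s' -> [disjoint X s & X s']) &
      (forall v, exists s, v \in X s)].

Definition tree_minus (n : nat) (tr : rel 'I_n) (t : 'I_n) : rel 'I_n :=
  [rel a b | [&& tr a b, a != t & b != t]].

Definition cross (V : finType) (e : rel V) (n : nat) (tr : rel 'I_n)
    (X : 'I_n -> {set V}) (t : 'I_n) : nat :=
  #|[set f : {set V} | [exists u, exists v, exists s, exists s',
       [&& f == [set u; v], e u v, u \in X s, v \in X s', s != t, s' != t &
           ~~ connect (tree_minus tr t) s s']]]|.

Definition ecrw_le (V : finType) (e : rel V) (alpha k : nat) : Prop :=
  exists n (tr : rel 'I_n) (X : 'I_n -> {set V}),
    [/\ is_tcd e tr X, (forall t, #|X t| <= alpha) & (forall t, cross e tr X t <= k)].

Definition induced (V : finType) (e : rel V) (S : {set V}) : rel {x : V | x \in S} :=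
  fun x y => e (val x) (val y).

Definition gammaS (V : finType) (e : rel V) (S : {set V}) (Y : {set {x : V | x \in S}}) : nat :=
  \sum_(v in Y) delta e [set val v] (~: S).

Definition is_star (n : nat) (tr : rel 'I_n) (tc : 'I_n) : Prop :=
  (forall a b, tr a b = ((a == tc) && (b != tc)) || ((b == tc) && (a != tc)))
  /\ exists t, t != tc.

Arguments induced {V} e S _ _.
Arguments gammaS {V} e S Y.

From mathcomp Require Import all_boot zify.
Set Implicit Arguments. Unset Strict Implicit. Unset Printing Implicit Defensive.

(* Proof of Lemma 4.1: from a tree-cut decomposition (T, X) of G of thickness
   <= alpha and crossing number <= k we build the required star decomposition
   of G[S] by contracting T around a well-chosen node t.
   - Weight every node y of T by the sum of gamma_S over the vertices of S in X y;
     the total weight is gamma_S(S) <= |delta(S, V \ S)| <= 2 alpha^2 + 4k.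
   - Choose t a weighted centroid of T: every component of T - t has weight at
     most half of the total, i.e. at most alpha^2 + 2k.
   - The star has centre bag X t (restricted to S) and one leaf per component C
     of T - t, with bag the vertices of S in C. Crossing edges at the centre cross
     at t in T; edges from a leaf C to the centre either join X c and X t, for c
     the neighbour of t in C (at most alpha^2 of them), or cross at c in T. *)

Section ConnectedEdgeBound.
Variables (T : finType) (r : rel T) (t0 : T).
Hypothesis r_connected : forall a b, connect r a b.

Definition ball (k : nat) : {set T} :=
  iter k (fun A => A :|: [set y | [exists x in A, r x y]]) [set t0].

Lemma ballS k y : (y \in ball k.+1) = (y \in ball k) || [exists x in ball k, r x y].
Proof. by rewrite /ball /= -/(ball k) in_setU inE. Qed.

Lemma ball_path x p k :
  path r x p -> x \in ball k -> last x p \in ball (k + size p).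
Proof.
elim: p x k => [|y p IH] x k /=; first by rewrite addn0.
move=> /andP[rxy hp] hx; rewrite addnS -addSn; apply: IH => //.
by rewrite ballS; apply/orP; right; apply/existsP; exists x; rewrite hx.
Qed.

Lemma in_some_ball v : exists k, v \in ball k.
Proof.
have /connectP[p hp ->] := r_connected t0 v.
by exists (0 + size p); apply: ball_path => //; rewrite /ball /= set11.
Qed.

Definition depth (v : T) : nat := ex_minn (in_some_ball v).

Lemma depthP v : v \in ball (depth v).
Proof. by rewrite /depth; case: ex_minnP. Qed.

Lemma depth_min v k : v \in ball k -> depth v <= k.
Proof. by rewrite /depth; case: ex_minnP => m _ hmin /hmin. Qed.

Lemma parent_exists v : v != t0 -> exists p, r p v && (depth p < depth v).
Proof.
move=> hv; move: (depthP v) (@depth_min v); case: (depth v) => [|m] hball hmin.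
  by move: hball; rewrite /ball /= inE (negbTE hv).
move: hball; rewrite ballS => /orP[hm|/existsP[p /andP[hp rpv]]].
  by have := hmin m hm; rewrite ltnn.
by exists p; rewrite rpv ltnS depth_min.
Qed.

Definition parent (v : T) : T :=
  if [pick p | r p v && (depth p < depth v)] is Some p then p else v.

Lemma parentP v : v != t0 -> r (parent v) v && (depth (parent v) < depth v).
Proof.
move=> hv; rewrite /parent; case: pickP => [p //|none].
by have [p] := parent_exists hv; rewrite none.
Qed.

(* v |-> {v, parent v} injects the non-root vertices into the edges. *)
Lemma connected_edges_lb : #|T|.-1 <= #|edges r|.
Proof.
pose parent_edge v := [set v; parent v].
have inj : {in [set~ t0] &, injective parent_edge}.
  move=> v w; rewrite !inE => hv hw /setP E.
  have := E v; rewrite !inE eqxx /= => /esym /orP[/eqP//|/eqP vpw].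
  have := E w; rewrite !inE eqxx /= => /orP[/eqP//|/eqP wpv].
  have /andP[_] := parentP hv; have /andP[_] := parentP hw.
  rewrite -vpw -wpv => h1 h2; by have := ltn_trans h1 h2; rewrite ltnn.
rewrite -(cardsC1 t0) -(card_in_imset inj); apply: subset_leq_card.
apply/subsetP => f /imsetP[v hv ->]; rewrite !inE in hv.
rewrite inE; apply/existsP; exists (parent v); apply/existsP; exists v.
by have /andP[-> _] := parentP hv; rewrite andbT setUC.
Qed.

End ConnectedEdgeBound.

Section Components.
Variables (n : nat) (tr : rel 'I_n).

Lemma tree_minus_sym t : symmetric tr -> symmetric (tree_minus tr t).
Proof. by move=> sym a b; rewrite /tree_minus /= sym [(b != t) && _]andbC. Qed.

(* A walk from x that ends in t or s reaches s avoiding t, or t avoiding s: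
   cut it at its first visit of {t, s}. *)
Lemma path_split t s x p : t != s -> x != t -> x != s ->
  path tr x p -> (last x p == t) || (last x p == s) ->
  connect (tree_minus tr t) x s || connect (tree_minus tr s) x t.
Proof.
move=> ts; elim: p x => [|y p IH] x hxt hxs /=; first by rewrite (negbTE hxt) (negbTE hxs).
move=> /andP[hxy hp] hl.
case: (eqVneq y s) => [ys|hys].
  by apply/orP; left; apply: connect1; rewrite /tree_minus /= -ys hxy hxt ys eq_sym ts.
case: (eqVneq y t) => [yt|hyt].
  by apply/orP; right; apply: connect1; rewrite /tree_minus /= -yt hxy hxs yt ts.
have /orP[h|h] := IH y hyt hys hp hl; apply/orP; [left|right];
  apply: connect_trans h; apply: connect1; by rewrite /tree_minus /= hxy ?hxt ?hxs ?hyt ?hys.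
Qed.

Hypothesis tr_connected : forall a b, connect tr a b.

Lemma avoid_one_end t s x : t != s -> x != t -> x != s ->
  ~~ connect (tree_minus tr t) x s -> connect (tree_minus tr s) x t.
Proof.
move=> ts hxt hxs hn; have /connectP[p hp hl] := tr_connected x t.
have := path_split ts hxt hxs hp; rewrite -hl eqxx => /(_ isT) /orP[h|//].
by rewrite h in hn.
Qed.

Lemma neighbor_toward t x : x != t ->
  exists c, tr c t && connect (tree_minus tr t) x c.
Proof.
move=> hx; have /connectP[p hp hl] := tr_connected x t.
elim: p x hx hp hl => [|y p IH] x hx /=; first by move=> _ E; rewrite E eqxx in hx.
move=> /andP[hxy hp] hl.
case: (eqVneq y t) => [yt|hyt]; first by exists x; rewrite -yt hxy connect0.
have [c /andP[hc cc]] := IH y hyt hp hl; exists c; rewrite hc /=.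
apply: connect_trans cc; apply: connect1; by rewrite /tree_minus /= hxy hx hyt.
Qed.

End Components.

Definition remove_edge (T : finType) (r : rel T) (a b : T) : rel T :=
  [rel x y | r x y && ([set x; y] != [set a; b])].

Lemma remove_edge_sym (T : finType) (r : rel T) a b :
  symmetric r -> symmetric (remove_edge r a b).
Proof. by move=> sym x y; rewrite /remove_edge /= sym setUC. Qed.

Lemma connect_remove_edge (T : finType) (r : rel T) a b x y : symmetric r ->
  connect (remove_edge r a b) a b -> connect r x y -> connect (remove_edge r a b) x y.
Proof.
move=> sym cab; apply: connect_sub => {}x {}y rxy.
case: (boolP ([set x; y] == [set a; b])) => [/eqP/setP E|ne].
  2: by apply: connect1; rewrite /remove_edge /= rxy.
have := E x; have := E y; rewrite !inE !eqxx orbT /= => /esym hy /esym hx.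
case/orP: hx => /eqP ->; case/orP: hy => /eqP -> //; rewrite ?connect0 //.
by rewrite (sym_connect_sym (remove_edge_sym a b sym)).
Qed.

Section Trees.
Variables (n : nat) (tr : rel 'I_n).
Hypothesis tr_tree : is_tree tr.

Let tr_sym : symmetric tr. Proof. by case: tr_tree. Qed.
Let tr_connected : forall a b, connect tr a b. Proof. by case: tr_tree. Qed.

(* Every edge of a tree is a bridge: a tree has exactly n - 1 edges, while a
   connected graph on n vertices needs at least n - 1. *)
Lemma tree_edge_essential t s : tr t s -> ~~ connect (remove_edge tr t s) t s.
Proof.
move=> trts; apply/negP => cts; have [_ _ _ _ ecount] := tr_tree.
have := connected_edges_lb t (fun a b => connect_remove_edge tr_sym cts (tr_connected a b)).
have sube : edges (remove_edge tr t s) \subset edges tr :\ [set t; s].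
  apply/subsetP => f; rewrite !inE => /existsP[u /existsP[v /andP[/eqP -> /andP[huv hne]]]].
  by rewrite hne; apply/existsP; exists u; apply/existsP; exists v; rewrite eqxx.
have ine : [set t; s] \in edges tr.
  by rewrite inE; apply/existsP; exists t; apply/existsP; exists s; rewrite eqxx.
have := cardsD1 [set t; s] (edges tr); rewrite ine ecount card_ord /=.
move=> Eedges /leq_trans/(_ (subset_leq_card sube)).
by rewrite Eedges add1n ltnn.
Qed.

Lemma tree_minus_remove_edge u t s : (u == t) || (u == s) ->
  subrel (tree_minus tr u) (remove_edge tr t s).
Proof.
move=> hu a b /and3P[hab ha hb]; rewrite /remove_edge /= hab /=; apply/eqP => E.
have : u \in [set t; s] by rewrite !inE.
by rewrite -E !inE => /orP[]/eqP E'; [move: ha|move: hb]; rewrite E' eqxx.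
Qed.

Lemma tree_edge_separates t s z : tr t s ->
  connect (tree_minus tr t) s z -> connect (tree_minus tr s) z t -> False.
Proof.
move=> trts c1 c2.
have cst : connect (remove_edge tr t s) s t.
  have lift u : (u == t) || (u == s) ->
      forall a b, connect (tree_minus tr u) a b -> connect (remove_edge tr t s) a b.
    by move=> hu a b; apply: connect_sub => x y h; apply/connect1/(tree_minus_remove_edge hu).
  by apply: (connect_trans (y := z)); [apply: (lift t) c1 | apply: (lift s) c2];
    rewrite eqxx ?orbT.
have := tree_edge_essential trts.
by rewrite (sym_connect_sym (remove_edge_sym t s tr_sym)) cst.
Qed.

End Trees.

(* Weight of the component of T - t containing x (0 when x = t). *)
Definition comp_weight (n : nat) (tr : rel 'I_n) (w : 'I_n -> nat) (t x : 'I_n) : nat :=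
  \sum_(y | (y != t) && connect (tree_minus tr t) x y) w y.

Section Centroid.
Variables (n : nat) (tr : rel 'I_n) (w : 'I_n -> nat).
Hypothesis tr_tree : is_tree tr.

Let tr_sym : symmetric tr. Proof. by case: tr_tree. Qed.
Let tr_irr : irreflexive tr. Proof. by case: tr_tree. Qed.
Let tr_connected : forall a b, connect tr a b. Proof. by case: tr_tree. Qed.
Let minus_connect_sym t : connect_sym (tree_minus tr t).
Proof. exact/sym_connect_sym/tree_minus_sym. Qed.

Local Notation cw := (comp_weight tr w).
Local Notation W := (\sum_y w y).

Lemma comp_weight_eq t x x' : connect (tree_minus tr t) x x' -> cw t x = cw t x'.
Proof.
move=> cxx'; apply: eq_bigl => y; congr (_ && _); apply/idP/idP.
  by apply: connect_trans; rewrite minus_connect_sym.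
exact: connect_trans.
Qed.

Lemma comp_weight_le t x : cw t x <= W.
Proof.
by rewrite [X in _ <= X](bigID (fun y => (y != t) && connect (tree_minus tr t) x y)) leq_addr.
Qed.

(* The two sides of a tree edge tc are disjoint, so their weights add up to at most W. *)
Lemma comp_weight_opposite t c : tr t c -> cw c t + cw t c <= W.
Proof.
move=> htc; rewrite /comp_weight [X in X + _]big_mkcond [X in _ + X]big_mkcond -big_split /=.
apply: leq_sum => z _.
case: ifP => [/andP[_ czt]|_]; case: ifP => [/andP[_ ctz]|_]; rewrite ?addn0 //.
by exfalso; apply: (tree_edge_separates tr_tree htc ctz); rewrite minus_connect_sym.
Qed.

Definition heavy (t : 'I_n) : {set 'I_n} := [set x | (x != t) && (W < 2 * cw t x)].

(* Moving from t to its neighbour c towards a heavy component strictly shrinks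
   the set of heavy nodes: heavy components at c lie on c's side of the edge. *)
Lemma heavy_shift t x c : x \in heavy t -> tr c t -> connect (tree_minus tr t) x c ->
  heavy c \proper heavy t.
Proof.
rewrite inE => /andP[hx hxw] hct cxc.
have tc : t != c by apply/eqP => E; move: hct; rewrite E tr_irr.
have hcw : cw t x = cw t c by apply: comp_weight_eq.
apply/properP; split; last first.
  by exists c; rewrite !inE ?eqxx // eq_sym tc -hcw.
apply/subsetP => y; rewrite !inE => /andP[hyc hy].
have nyt : ~~ connect (tree_minus tr c) y t.
  apply/negP => cyt; have Ecy : cw c y = cw c t by apply: comp_weight_eq.
  have htc : tr t c by rewrite tr_sym.
  have := comp_weight_opposite htc; rewrite -hcw; lia.
have yt : y != t by apply/eqP => E; rewrite E connect0 in nyt.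
have cyc : connect (tree_minus tr t) y c.
  by apply/negPn/negP => h; rewrite (avoid_one_end tr_connected tc yt hyc h) in nyt.
rewrite yt /=; apply: (leq_trans hy); rewrite leq_mul2l /=.
apply: sub_le_big => [|a b|z /andP[hzc cyz]]; [exact: leqnn|exact: leq_addr|].
have zt : z != t by apply/eqP => E; rewrite -E cyz in nyt.
have nzt : ~~ connect (tree_minus tr c) z t.
  by apply/negP => h; rewrite (connect_trans cyz h) in nyt.
have czc : connect (tree_minus tr t) z c.
  by apply/negPn/negP => h; rewrite (avoid_one_end tr_connected tc zt hzc h) in nzt.
by rewrite zt (connect_trans cyc) // minus_connect_sym.
Qed.

(* Every tree has a centroid: a node t such that each component of T - t has at
   most half of the total weight. Take t with the fewest heavy nodes. *)
Lemma centroid : exists t : 'I_n, forall x, x != t -> 2 * cw t x <= W.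
Proof.
have [n0 _ _ _ _] := tr_tree.
pose t := [arg min_(u < Ordinal n0) #|heavy u|].
exists t => x hx; rewrite leqNgt; apply/negP => hxw.
have hxt : x \in heavy t by rewrite inE hx hxw.
have [c /andP[hct cxc]] := neighbor_toward tr_connected hx.
have := proper_card (heavy_shift hxt hct cxc); rewrite /t.
by case: arg_minnP => // u _ /(_ c isT); rewrite leqNgt => /negP.
Qed.

End Centroid.

Definition star (n : nat) (t : 'I_n) : rel 'I_n :=
  fun a b => ((a == t) && (b != t)) || ((b == t) && (a != t)).

(* The star is a tree: connected through t, with one edge per leaf. *)
Lemma star_tree n (t : 'I_n) : is_tree (star t).
Proof.
split.
- exact: leq_ltn_trans (leq0n t) (ltn_ord t).
- by move=> a b; rewrite /star orbC.
- by move=> a; rewrite /star; case: (a == t).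
- move=> a b; apply: (connect_trans (y := t)).
    case: (eqVneq a t) => [->|ha]; first exact: connect0.
    by apply: connect1; rewrite /star eqxx ha orbT.
  case: (eqVneq b t) => [->|hb]; first exact: connect0.
  by apply: connect1; rewrite /star eqxx hb.
- have -> : edges (star t) = [set [set t; s] | s in [set~ t]].
    apply/setP => f; rewrite inE; apply/existsP/imsetP.
      move=> [u /existsP[v /andP[/eqP -> /orP[]/andP[/eqP -> ht]]]].
        by exists v; rewrite ?inE.
      by exists u; rewrite 1?setUC ?inE.
    move=> [s hs ->]; exists t; apply/existsP; exists s.
    by rewrite !inE in hs; rewrite /star !eqxx hs.
  rewrite card_in_imset ?cardsC1 ?card_ord // => s s'; rewrite !inE => hs hs' /setP E.
  by have := E s; rewrite !inE eqxx orbT (negbTE hs) => /esym/eqP.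
Qed.

Definition cut_edges (V : finType) (e : rel V) (A B : {set V}) : {set {set V}} :=
  [set f | [exists u, exists v, [&& f == [set u; v], e u v, u \in A & v \in B]]].

(* An edge of G leaving S has exactly one endpoint in S, so it is counted by
   gamma_S of a single vertex: summing gamma_S over S counts each such edge once. *)
Lemma sum_gamma_le_delta (V : finType) (e : rel V) (S : {set V}) :
  \sum_(x : {x : V | x \in S}) delta e [set val x] (~: S) <= delta e S (~: S).
Proof.
have unique_end f (x y : {x : V | x \in S}) : f \in cut_edges e [set val x] (~: S) ->
    f \in cut_edges e [set val y] (~: S) -> x = y.
  rewrite !inE => /existsP[u /existsP[v /and4P[/eqP -> _ hu hv]]].
  move=> /existsP[u' /existsP[v' /and4P[/eqP E _ hu' _]]].
  move: hu hu'; rewrite !inE => /eqP hu /eqP hu'; apply: val_inj.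
  have : val y \in [set u; v] by rewrite E hu' !inE eqxx.
  rewrite !inE hu => /orP[/eqP //|/eqP yv].
  by move: hv; rewrite inE -yv (valP y).
change (\sum_(x : {x : V | x \in S}) #|cut_edges e [set val x] (~: S)| <= #|cut_edges e S (~: S)|).
under eq_bigr => x _ do rewrite -sum1_card big_mkcond.
rewrite exchange_big -sum1_card [X in _ <= X]big_mkcond; apply: leq_sum => f _.
case: (pickP (fun x : {x : V | x \in S} => f \in cut_edges e [set val x] (~: S))) => [x0 hx0|none].
  rewrite (bigD1 x0) //= hx0 big1 => [|x hx]; last first.
    by case: ifP => // /(unique_end _ _ _ ^~ hx0) E; rewrite E eqxx in hx.
  suff -> : f \in cut_edges e S (~: S) by [].
  move: hx0; rewrite !inE => /existsP[u /existsP[v /and4P[hf huv hu hv]]].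
  apply/existsP; exists u; apply/existsP; exists v; rewrite hf huv hv andbT /=.
  by move: hu; rewrite inE => /eqP ->; apply: (valP x0).
by rewrite big1 // => x _; rewrite none.
Qed.

Lemma card_sub_edges_le (V : finType) (S : pred V)
    (A : {set {set {x : V | S x}}}) (B : {set {set V}}) :
  (forall f, f \in A -> val @: f \in B) -> #|A| <= #|B|.
Proof.
move=> h; rewrite -(card_imset _ (imset_inj val_inj)); apply: subset_leq_card.
by apply/subsetP => g /imsetP[f hf ->]; apply: h.
Qed.

Section StarContraction.
Variables (V : finType) (e : rel V) (S : {set V}).
Variables (n : nat) (tr : rel 'I_n) (X : 'I_n -> {set V}).
Hypothesis X_tcd : is_tcd e tr X.

Local Notation VS := {x : V | x \in S}.

Let tr_tree : is_tree tr. Proof. by case: X_tcd. Qed.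
Let tr_sym : symmetric tr. Proof. by case: tr_tree. Qed.
Let tr_irr : irreflexive tr. Proof. by case: tr_tree. Qed.
Let tr_connected : forall a b, connect tr a b. Proof. by case: tr_tree. Qed.
Let X_cover v : exists s, v \in X s. Proof. by case: X_tcd. Qed.

Definition home (v : V) : 'I_n := xchoose (X_cover v).

Lemma homeP v : v \in X (home v).
Proof. exact: xchooseP (X_cover v). Qed.

Definition node_weight (y : 'I_n) : nat :=
  \sum_(x : VS | home (val x) == y) delta e [set val x] (~: S).

Local Notation W := (\sum_y node_weight y).

Lemma total_node_weight : W = \sum_(x : VS) delta e [set val x] (~: S).
Proof. by rewrite (partition_big (fun x : VS => home (val x)) xpredT). Qed.

(* The centre of the star: a centroid of T for node_weight; when all weights vanish
   any home of a vertex of S will do. *)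
Lemma balanced_center : S != set0 -> exists t,
  (forall x, x != t -> 2 * comp_weight tr node_weight t x <= W) /\
  (W = 0 -> exists x : VS, home (val x) = t).
Proof.
case/set0Pn => v hv; case: (eqVneq W 0) => [W0|Wpos].
  exists (home v); split; last by exists (exist _ v hv).
  by move=> x _; have := @comp_weight_le _ tr node_weight (home v) x; rewrite W0 leqn0 => /eqP ->.
by have [t Ht] := @centroid _ tr node_weight tr_tree; exists t; split => // W0; rewrite W0 in Wpos.
Qed.

Variable t : 'I_n.
Local Notation Tt := (tree_minus tr t).

Let Tt_connect_sym : connect_sym Tt.
Proof. exact/sym_connect_sym/tree_minus_sym. Qed.

Lemma another_node : #|X t| < #|S| -> exists s, s != t.
Proof.
case: (boolP [exists s, s != t]) => [/existsP//|]; rewrite negb_exists => /forallP all_t.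
have : S \subset X t.
  by apply/subsetP => v _; have := all_t (home v); rewrite negbK => /eqP <-; exact: homeP.
by move/subset_leq_card; rewrite leqNgt => /negP.
Qed.

Lemma root_Tt_ne y : y != t -> root Tt y != t.
Proof.
move=> hy; have closedT : closed Tt [pred z | z != t].
  by move=> a b /and3P[_ ha hb]; rewrite !inE ha hb.
by have := closed_connect closedT (connect_root Tt y); rewrite !inE hy => <-.
Qed.

(* Contraction to a star centred at t: the centre keeps the vertices of S in X t,
   and each component of T - t (indexed by its root) becomes one leaf whose bag
   collects the vertices of S lying in that component. Other leaves are empty. *)
Definition contracted_bag (a : 'I_n) : {set VS} :=
  [set x | if a == t then home (val x) == t
           else (home (val x) != t) && (root Tt (home (val x)) == a)].

Lemma in_leaf_bag s x : s != t ->
  (x \in contracted_bag s) = (home (val x) != t) && (root Tt (home (val x)) == s).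
Proof. by move=> hs; rewrite inE (negbTE hs). Qed.

Lemma contracted_tcd : is_tcd (induced e S) (star t) contracted_bag.
Proof.
split; first exact: star_tree.
  move=> a b ab; rewrite -setI_eq0; apply/eqP/setP => x; rewrite !inE.
  apply/negbTE/negP => /andP[xa xb].
  case: (eqVneq a t) xa => [at'|ha] xa; case: (eqVneq b t) xb => [bt|hb] xb.
  - by move: ab; rewrite at' bt eqxx.
  - by move: xb => /andP[]; rewrite xa.
  - by move: xa => /andP[]; rewrite xb.
  - by move: xa xb ab => /andP[_ /eqP <-] /andP[_ /eqP <-]; rewrite eqxx.
move=> x; case: (eqVneq (home (val x)) t) => [E|ne].
  by exists t; rewrite inE eqxx E.
by exists (root Tt (home (val x))); rewrite in_leaf_bag ?root_Tt_ne // ne eqxx.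
Qed.

Lemma contracted_center_card : #|contracted_bag t| <= #|X t|.
Proof.
rewrite -(card_imset _ val_inj); apply: subset_leq_card; apply/subsetP => v.
by case/imsetP => x; rewrite inE eqxx => /eqP hx ->; rewrite -hx homeP.
Qed.

(* Two distinct leaves come from distinct components of T - t, so an edge between
   them is already crossing at t in T. *)
Lemma contracted_center_cross :
  cross (induced e S) (star t) contracted_bag t <= cross e tr X t.
Proof.
apply: card_sub_edges_le => f; rewrite inE.
case/existsP=> u /existsP[v /existsP[a /existsP[b /and4P[/eqP -> huv hu /and4P[hv ha hb hc]]]]].
have ab : a != b by apply/eqP => E; rewrite E connect0 in hc.
move: hu hv; rewrite !in_leaf_bag // => /andP[nu /eqP ru] /andP[nv /eqP rv].
rewrite imsetU1 imset_set1 inE; apply/existsP; exists (val u); apply/existsP; exists (val v).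
apply/existsP; exists (home (val u)); apply/existsP; exists (home (val v)).
rewrite eqxx; rewrite /induced in huv; rewrite huv !homeP nu nv /=.
by apply/negP => /(rootP Tt_connect_sym) E; move: ab; rewrite -ru -rv E eqxx.
Qed.

(* A leaf bag consists of vertices homed in its component of T - t. *)
Lemma leaf_gamma s : s != t ->
  gammaS e S (contracted_bag s) <= comp_weight tr node_weight t s.
Proof.
move=> hs; rewrite /gammaS (partition_big (fun x : VS => home (val x)) xpredT) //=.
rewrite [X in _ <= X]big_mkcond; apply: leq_sum => y _; case: ifP => [_|hy].
  by apply: sub_le_big => [|a b|x /andP[_ ->]] //; exact: leq_addr.
rewrite big1 // => x /andP[]; rewrite in_leaf_bag // => /andP[nt /eqP rt] /eqP hxy.
by move: hy; rewrite -hxy nt Tt_connect_sym -rt connect_root.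
Qed.

(* An edge from a leaf bag to the centre either joins X c and X t, where c is the
   neighbour of t in that component, or it is crossing at c in T. *)
Lemma leaf_delta (alpha k : nat) s :
  (forall a, #|X a| <= alpha) -> (forall a, cross e tr X a <= k) -> s != t ->
  delta (induced e S) (contracted_bag s) (contracted_bag t) <= alpha ^ 2 + k.
Proof.
move=> thick crossk hs; case: (set_0Vmem (contracted_bag s)) => [E0|[x0 hx0]].
  suff -> : delta (induced e S) (contracted_bag s) (contracted_bag t) = 0 by [].
  apply/eqP; rewrite cards_eq0; apply/eqP/setP => f; rewrite !inE.
  by apply/existsP => -[u /existsP[v]]; rewrite E0 inE /= !andbF.
have N0 : home (val x0) != t by move: hx0; rewrite in_leaf_bag // => /andP[].
have [c /andP[hct cN0c]] := neighbor_toward tr_connected N0.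
have htc : tr t c by rewrite tr_sym.
have tc : t != c by apply/eqP => E; move: htc; rewrite E tr_irr.
have conn_u u : u \in contracted_bag s -> connect Tt (home (val u)) c.
  move=> hu; apply: connect_trans cN0c; apply/(rootP Tt_connect_sym).
  by move: hu hx0; rewrite !in_leaf_bag // => /andP[_ /eqP ->] /andP[_ /eqP ->].
pose A := [set [set p.1; p.2] | p in setX (X c) (X t)].
pose B := [set f : {set V} | [exists u, exists v, exists s1, exists s2,
     [&& f == [set u; v], e u v, u \in X s1, v \in X s2, s1 != c, s2 != c &
         ~~ connect (tree_minus tr c) s1 s2]]].
have hA : #|A| <= alpha ^ 2.
  apply: leq_trans (leq_imset_card _ _) _; rewrite cardsX -mulnn.
  exact: leq_mul (thick c) (thick t).
apply: leq_trans (leq_add hA (crossk c)); apply: leq_trans (leq_card_setU A B).1.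
apply: card_sub_edges_le => f; rewrite inE.
case/existsP=> u /existsP[v /and4P[/eqP -> huv hu hv]].
have nvt : home (val v) = t by move: hv; rewrite inE eqxx => /eqP.
rewrite imsetU1 imset_set1 inE; case: (eqVneq (home (val u)) c) => [Nc|Nnc].
  apply/orP; left; apply/imsetP; exists (val u, val v) => //.
  by rewrite inE -{1}Nc -{1}nvt !homeP.
apply/orP; right; rewrite inE; apply/existsP; exists (val u); apply/existsP; exists (val v).
apply/existsP; exists (home (val u)); apply/existsP; exists t.
rewrite eqxx; rewrite /induced in huv; rewrite huv homeP -{1}nvt homeP Nnc tc /=.
apply/negP => h; apply: (tree_edge_separates tr_tree htc _ h).
by rewrite Tt_connect_sym; apply: conn_u.
Qed.

Lemma full_leaf_bag s : s != t -> contracted_bag s = setT ->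
  gammaS e S (contracted_bag s) = W /\ forall x : VS, home (val x) != t.
Proof.
move=> hs full; split.
  by rewrite total_node_weight /gammaS full; apply: eq_bigl => x; rewrite inE.
by move=> x; have := in_setT x; rewrite -full in_leaf_bag // => /andP[].
Qed.

End StarContraction.

Theorem lemma4p1 (V : finType) (e : rel V) (Hsym : symmetric e) (Hirr : irreflexive e)
    (alpha k : nat) (Ha : 0 < alpha) (Hk : 0 < k) (S : {set V})
    (HS : alpha.+1 <= #|S|)
    (Hdelta : delta e S (~: S) <= 2 * alpha ^ 2 + 4 * k)
    (Hecrw : ecrw_le e alpha k) :
  exists (n : nat) (tr : rel 'I_n) (X : 'I_n -> {set {x : V | x \in S}}) (tc : 'I_n),
    [/\ is_tcd (induced e S) tr X,
        is_star tr tc,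
        #|X tc| <= alpha /\ cross (induced e S) tr X tc <= k,
        (forall t, t != tc ->
           gammaS e S (X t) <= alpha ^ 2 + 2 * k /\
           delta (induced e S) (X t) (X tc) <= alpha ^ 2 + k) &
        (forall q, q != tc -> X q != [set: {x : V | x \in S}])].
Proof.
have [n [tr [X [X_tcd thick crossk]]]] := Hecrw.
have W_le : \sum_y node_weight S X_tcd y <= 2 * alpha ^ 2 + 4 * k.
  by rewrite total_node_weight; apply: leq_trans (sum_gamma_le_delta e S) Hdelta.
have S0 : S != set0 by rewrite -card_gt0; apply: leq_trans HS.
have [t [balanced W0_home]] := balanced_center X_tcd S0.
have [s0 hs0] := another_node X_tcd (leq_ltn_trans (thick t) HS).
exists n, (star t), (contracted_bag S X_tcd t), t; split.
- exact: contracted_tcd.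
- by split=> [//|]; exists s0.
- split; first exact: leq_trans (contracted_center_card S X_tcd t) (thick t).
  exact: leq_trans (contracted_center_cross S X_tcd t) (crossk t).
- move=> s hs; split; last exact: leaf_delta.
  have := leaf_gamma S X_tcd hs; have := balanced s hs; lia.
- move=> q hq; apply/negP => /eqP full; have [gamma_all no_home] := full_leaf_bag hq full.
  have := leaf_gamma S X_tcd hq; have := balanced q hq; rewrite gamma_all => half_le all_le.
  have [x hx] := W0_home ltac:(lia).
  by have := no_home x; rewrite hx eqxx.
Qed.
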